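(* Let $\gamma>0$, $s>0$, $D_2=\partial/\partial v$, and $G(u,v;s)=(u^2+v^2)^{-s}$ for $(u,v)\in\mathbb{R}^2\setminus\{(0,0)\}$. If $u\ge\gamma$ and $v\in\mathbb{R}$, then $$\frac{|D_2G(u,v;s)|}{G(u,v;s)}\le\frac{s}{\gamma},\qquad -\frac{2s}{\gamma^2}\le\frac{D_2^2G(u,v;s)}{G(u,v;s)}\le\frac{2s(2s+1)}{4\gamma^2},$$ $$\frac{|D_2^3G(u,v;s)|}{G(u,v;s)}\le\frac{2s(2s+2)}{\gamma^3}\max\Big\{\frac{25\sqrt5}{72},\frac{2s+1}{8}\Big\},$$ $$-\frac{2s(s+1)(2s+2)\cdot3}{\gamma^4}\le\frac{D_2^4G(u,v;s)}{G(u,v;s)}\le\frac{2s(2s+1)(2s+2)(2s+3)}{\gamma^4}.$$ *)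

From Stdlib Require Import Reals.
From Coquelicot Require Import Coquelicot.
Open Scope R_scope.

Definition G (u v s : R) : R := Rpower (u ^ 2 + v ^ 2) (- s).

Definition D2n (k : nat) (u v s : R) : R := Derive_n (fun w => G u w s) k v.

From Stdlib Require Import Reals Lra Psatz.
From Coquelicot Require Import Coquelicot.
Open Scope R_scope.

(* Each D_2^k G (k <= 4) is G times a polynomial in u, v, s divided by
   (u^2 + v^2)^k, so after dividing by G and clearing denominators every bound
   says that a polynomial numerator times gamma^k is at most a nonnegative
   quantity.  When the numerator is nonpositive this is immediate; otherwise
   gamma^k may be raised to u^k, which leaves homogeneous polynomial
   inequalities in u and v: an AM-GM step for k = 1, 2, a one-variable
   estimate of v(3u^2 - v^2) for k = 3, and sum-of-squares identities for the
   quartic numerator for k = 4. *)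

Lemma Rabs_div_pos x y : 0 < y -> Rabs x / y = Rabs (x / y).
Proof. intros hy; rewrite Rabs_div, (Rabs_pos_eq y); lra. Qed.

Lemma Rdiv_le_div_cross a b c d :
  0 < b -> 0 < d -> a * d <= c * b -> a / b <= c / d.
Proof.
  intros hb hd h.
  apply (Rmult_le_reg_r (b * d)); [nra |].
  replace (a / b * (b * d)) with (a * d) by (field; lra).
  replace (c / d * (b * d)) with (c * b) by (field; lra).
  exact h.
Qed.

Lemma Rmult_pow_le_of_base_le N B g u k :
  0 < g <= u -> 0 <= B -> N * u ^ k <= B -> N * g ^ k <= B.
Proof.
  intros hgu hB h.
  assert (hgk : 0 <= g ^ k) by (apply pow_le; lra).
  destruct (Rle_or_lt N 0) as [hN | hN].
  - assert (N * g ^ k <= 0) by (apply Rmult_le_0_r; lra). lra.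
  - assert (N * g ^ k <= N * u ^ k) by (apply Rmult_le_compat_l, pow_incr; lra). lra.
Qed.

(* The supremum of z (3 - z^2) / (1 + z^2)^3 over z >= 0 is (3 + 2 sqrt 2) / 8
   ~ 0.729, attained at z = sqrt 2 - 1 ~ 0.41; the square below is centred
   near that point. *)
Lemma cubic_form_le_077 u x : 0 <= u -> 0 <= x ->
  x * u ^ 3 * (3 * u ^ 2 - x ^ 2) <= 0.77 * (u ^ 2 + x ^ 2) ^ 3.
Proof. intros hu hx; assert (h := pow2_ge_0 (u ^ 2 * (x - 0.43 * u))); nra. Qed.

Lemma le_077_25_sqrt5_div_72 : 0.77 <= 25 * sqrt 5 / 72.
Proof.
  assert (h := sqrt_sqrt 5 ltac:(lra)); assert (h0 := sqrt_pos 5); nra.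
Qed.

Lemma cubic_form_abs_le_Rmax c u x : 1 <= c -> 0 <= u -> 0 <= x ->
  x * Rabs (3 * u ^ 2 - c * x ^ 2) * u ^ 3 <=
  Rmax (25 * sqrt 5 / 72) (c / 8) * (u ^ 2 + x ^ 2) ^ 3.
Proof.
  intros hc hu hx.
  assert (hr : 0 <= (u ^ 2 + x ^ 2) ^ 3) by (apply pow_le; nra).
  assert (hu3 : 0 <= u ^ 3) by (apply pow_le; lra).
  assert (hxu3 : 0 <= x * u ^ 3) by nra.
  destruct (Rle_or_lt 0 (3 * u ^ 2 - c * x ^ 2)) as [hp | hn].
  - rewrite Rabs_pos_eq by lra.
    assert (h1 := cubic_form_le_077 u x hu hx).
    assert (h2 : 0.77 <= Rmax (25 * sqrt 5 / 72) (c / 8))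
      by (eapply Rle_trans; [apply le_077_25_sqrt5_div_72 | apply Rmax_l]).
    assert (0 <= (c - 1) * (x ^ 2 * (x * u ^ 3))) by (apply Rmult_le_pos; nra).
    nra.
  - rewrite Rabs_left by lra.
    assert (h2xu : (2 * x * u) ^ 3 <= (u ^ 2 + x ^ 2) ^ 3)
      by (apply pow_incr; split; [nra | assert (h := pow2_ge_0 (u - x)); nra]).
    assert (h2 := Rmax_r (25 * sqrt 5 / 72) (c / 8)).
    assert (x * - (3 * u ^ 2 - c * x ^ 2) * u ^ 3 <= c / 8 * (2 * x * u) ^ 3).
    { replace (c / 8 * (2 * x * u) ^ 3) with (c * x ^ 2 * (x * u ^ 3)) by field.
      assert (0 <= u ^ 2 * (x * u ^ 3)) by nra. nra. }
    nra.
Qed.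

Definition quartic (a y s : R) : R :=
  3 * (a + y) ^ 2 - 12 * (s + 2) * y * (a + y) + 4 * (s + 2) * (s + 3) * y ^ 2.

Lemma quartic_lower_bound a y s : 0 <= a -> 0 <= y -> 0 <= s ->
  - quartic a y s * a ^ 2 <= 3 * (s + 1) * (a + y) ^ 4.
Proof.
  intros ha hy hs.
  assert (hsos : 3 * (s + 1) * (a + y) ^ 4 + quartic a y s * a ^ 2 =
    (2 * a * y * s) ^ 2
    + (3 * a ^ 4 + 26 * a ^ 2 * y ^ 2 + 12 * a * y ^ 3 + 3 * y ^ 4) * s
    + 6 * a ^ 2 * ((a - y / 2) ^ 2 + 13 * y ^ 2 / 4) + 12 * a * y ^ 3 + 3 * y ^ 4)
    by (unfold quartic; field).
  assert (hy3 : 0 <= a * y ^ 3) by (apply Rmult_le_pos; [lra | apply pow_le; lra]).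
  assert (0 <= (3 * a ^ 4 + 26 * a ^ 2 * y ^ 2 + 12 * a * y ^ 3 + 3 * y ^ 4) * s)
    by (apply Rmult_le_pos; nra).
  assert (0 <= 6 * a ^ 2 * ((a - y / 2) ^ 2 + 13 * y ^ 2 / 4))
    by (apply Rmult_le_pos; nra).
  assert (h := pow2_ge_0 (2 * a * y * s)).
  assert (0 <= y ^ 4) by (apply pow_le; lra).
  lra.
Qed.

Lemma quartic_upper_bound a y s : 0 <= a -> 0 <= y -> 0 <= s ->
  quartic a y s <= (2 * s + 1) * (2 * s + 3) * (a + y) ^ 2.
Proof.
  intros ha hy hs.
  assert ((2 * s + 1) * (2 * s + 3) * (a + y) ^ 2 - quartic a y s =
          4 * s * (s + 2) * a * (a + y) + 4 * (s + 2) * (s + 3) * a * y)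
    by (unfold quartic; ring).
  assert (0 <= 4 * s * (s + 2) * a * (a + y)) by (repeat apply Rmult_le_pos; lra).
  assert (0 <= 4 * (s + 2) * (s + 3) * a * y) by (repeat apply Rmult_le_pos; lra).
  lra.
Qed.

Definition dG_num (k : nat) (u s w : R) : R :=
  match k with
  | 0 => 1
  | 1 => -2 * s * w
  | 2 => 2 * s * ((2 * s + 1) * w ^ 2 - u ^ 2)
  | 3 => 4 * s * (s + 1) * (w * (3 * u ^ 2 - (2 * s + 1) * w ^ 2))
  | 4 => 4 * s * (s + 1) * quartic (u ^ 2) (w ^ 2) s
  | _ => 0
  end.

Definition dG (k : nat) (u s w : R) : R :=
  dG_num k u s w * G u w s / (u ^ 2 + w ^ 2) ^ k.

Lemma G_pos u v s : 0 < G u v s.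
Proof. apply exp_pos. Qed.

Lemma is_derive_dG k u s w : (k < 4)%nat -> 0 < u ->
  is_derive (dG k u s) w (dG (S k) u s w).
Proof.
  intros hk hu.
  assert (hr : 0 < u ^ 2 + w ^ 2) by nra.
  destruct k as [|[|[|[|k]]]]; try lia;
    unfold dG, dG_num, quartic, G, Rpower; auto_derive;
    (* auto_derive unfolds u ^ 2 into u * (u * 1) *)
    change (u * (u * 1) + w * (w * 1)) with (u ^ 2 + w ^ 2);
    try (repeat split; try apply Rgt_not_eq; repeat apply Rmult_lt_0_compat; lra).
  all: field; lra.
Qed.

Lemma D2n_dG k u s w : (k <= 4)%nat -> 0 < u -> D2n k u w s = dG k u s w.
Proof.
  intros hk hu; revert w; induction k as [|k IHk]; intros w.
  - unfold D2n, dG, dG_num; simpl; field.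
  - unfold D2n in *; cbn [Derive_n].
    rewrite (Derive_ext _ _ w (IHk ltac:(lia))).
    apply is_derive_unique, is_derive_dG; [lia | exact hu].
Qed.

Definition dG_ratio (k : nat) (u s v : R) : R :=
  dG_num k u s v / (u ^ 2 + v ^ 2) ^ k.

Lemma D2n_div_G k u s v : (k <= 4)%nat -> 0 < u ->
  D2n k u v s / G u v s = dG_ratio k u s v.
Proof.
  intros hk hu; rewrite D2n_dG by assumption.
  assert (hG := G_pos u v s).
  assert (hr : (u ^ 2 + v ^ 2) ^ k <> 0) by (apply pow_nonzero; nra).
  unfold dG, dG_ratio; field; split; [exact hr | lra].
Qed.

Section RatioBounds.

Variables g s u v : R.
Hypotheses (hg : 0 < g) (hgu : g <= u) (hs : 0 < s).

Let hr : 0 < u ^ 2 + v ^ 2.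
Proof. nra. Qed.

Lemma dG_ratio_1_abs_le : Rabs (dG_ratio 1 u s v) <= s / g.
Proof.
  unfold dG_ratio; cbn [dG_num]; rewrite pow_1, <- Rabs_div_pos by lra.
  rewrite Rabs_mult, (Rabs_left (-2 * s)) by lra.
  apply Rdiv_le_div_cross; [lra | lra |].
  assert (hv := Rabs_pos v); rewrite <- (pow2_abs v).
  assert (key : 2 * Rabs v * g ^ 1 <= u ^ 2 + Rabs v ^ 2).
  { apply (Rmult_pow_le_of_base_le _ _ g u); [lra | nra |].
    assert (h := pow2_ge_0 (u - Rabs v)); nra. }
  nra.
Qed.

Lemma dG_ratio_2_ge : - (2 * s) / g ^ 2 <= dG_ratio 2 u s v.
Proof.
  unfold dG_ratio; cbn [dG_num].
  apply Rdiv_le_div_cross; [nra | nra |].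
  assert (key : (u ^ 2 - (2 * s + 1) * v ^ 2) * g ^ 2 <= (u ^ 2 + v ^ 2) ^ 2).
  { apply (Rmult_pow_le_of_base_le _ _ g u); [lra | nra |].
    assert (0 <= s * (u ^ 2 * v ^ 2)) by (apply Rmult_le_pos; nra). nra. }
  nra.
Qed.

Lemma dG_ratio_2_le : dG_ratio 2 u s v <= 2 * s * (2 * s + 1) / (4 * g ^ 2).
Proof.
  unfold dG_ratio; cbn [dG_num].
  apply Rdiv_le_div_cross; [nra | nra |].
  assert (key : 4 * ((2 * s + 1) * v ^ 2 - u ^ 2) * g ^ 2
                <= (2 * s + 1) * (u ^ 2 + v ^ 2) ^ 2).
  { apply (Rmult_pow_le_of_base_le _ _ g u); [lra | nra |].
    assert (0 <= (2 * s + 1) * (u ^ 2 - v ^ 2) ^ 2)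
      by (apply Rmult_le_pos; [lra | apply pow2_ge_0]).
    assert (h := pow2_ge_0 (u ^ 2)); nra. }
  nra.
Qed.

Lemma dG_ratio_3_abs_le :
  Rabs (dG_ratio 3 u s v) <=
  2 * s * (2 * s + 2) / g ^ 3 * Rmax (25 * sqrt 5 / 72) ((2 * s + 1) / 8).
Proof.
  unfold dG_ratio; cbn [dG_num]; rewrite <- Rabs_div_pos by (apply pow_lt; lra).
  set (M := Rmax _ _).
  rewrite Rabs_mult, (Rabs_pos_eq (4 * s * (s + 1)) ltac:(nra)), Rabs_mult.
  rewrite <- (pow2_abs v); assert (hv := Rabs_pos v); set (x := Rabs v) in *.
  assert (hM : 0 <= M) by (apply (Rle_trans _ ((2 * s + 1) / 8)); [lra | apply Rmax_r]).
  assert (key : x * Rabs (3 * u ^ 2 - (2 * s + 1) * x ^ 2) * g ^ 3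
                <= M * (u ^ 2 + x ^ 2) ^ 3).
  { apply (Rmult_pow_le_of_base_le _ _ g u); [lra | apply Rmult_le_pos, pow_le; nra |].
    apply cubic_form_abs_le_Rmax; lra. }
  replace (2 * s * (2 * s + 2) / g ^ 3 * M) with (4 * s * (s + 1) * M / g ^ 3)
    by (field; lra).
  apply Rdiv_le_div_cross; [apply pow_lt; nra | apply pow_lt; lra |].
  assert (0 < 4 * s * (s + 1)) by nra.
  nra.
Qed.

Lemma dG_ratio_4_ge :
  - (2 * s * (s + 1) * (2 * s + 2) * 3) / g ^ 4 <= dG_ratio 4 u s v.
Proof.
  unfold dG_ratio; cbn [dG_num].
  apply Rdiv_le_div_cross; [apply pow_lt; lra | apply pow_lt; lra |].
  assert (key : - quartic (u ^ 2) (v ^ 2) s * g ^ 4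
                <= 3 * (s + 1) * (u ^ 2 + v ^ 2) ^ 4).
  { apply (Rmult_pow_le_of_base_le _ _ g u); [lra | apply Rmult_le_pos, pow_le; nra |].
    replace (u ^ 4) with ((u ^ 2) ^ 2) by ring.
    apply quartic_lower_bound; nra. }
  assert (0 < 4 * s * (s + 1)) by nra.
  nra.
Qed.

Lemma dG_ratio_4_le :
  dG_ratio 4 u s v <= 2 * s * (2 * s + 1) * (2 * s + 2) * (2 * s + 3) / g ^ 4.
Proof.
  unfold dG_ratio; cbn [dG_num].
  apply Rdiv_le_div_cross; [apply pow_lt; lra | apply pow_lt; lra |].
  assert (hB : 0 <= (2 * s + 1) * (2 * s + 3) * (u ^ 2 + v ^ 2) ^ 4)
    by (apply Rmult_le_pos, pow_le; nra).
  assert (key : quartic (u ^ 2) (v ^ 2) s * g ^ 4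
                <= (2 * s + 1) * (2 * s + 3) * (u ^ 2 + v ^ 2) ^ 4).
  { apply (Rmult_pow_le_of_base_le _ _ g u); [lra | exact hB |].
    replace (u ^ 4) with ((u ^ 2) ^ 2) by ring.
    apply (Rmult_pow_le_of_base_le _ _ (u ^ 2) (u ^ 2 + v ^ 2)); [nra | exact hB |].
    replace ((u ^ 2 + v ^ 2) ^ 4) with ((u ^ 2 + v ^ 2) ^ 2 * (u ^ 2 + v ^ 2) ^ 2)
      by ring.
    rewrite <- Rmult_assoc; apply Rmult_le_compat_r; [nra |].
    apply quartic_upper_bound; nra. }
  assert (0 < 4 * s * (s + 1)) by nra.
  nra.
Qed.

End RatioBounds.

Theorem lemma5p7 (gamma s u v : R) :
  0 < gamma -> 0 < s -> gamma <= u ->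
  Rabs (D2n 1 u v s) / G u v s <= s / gamma /\
  (- (2 * s) / gamma ^ 2 <= D2n 2 u v s / G u v s /\
   D2n 2 u v s / G u v s <= 2 * s * (2 * s + 1) / (4 * gamma ^ 2)) /\
  Rabs (D2n 3 u v s) / G u v s <=
    2 * s * (2 * s + 2) / gamma ^ 3 *
    Rmax (25 * sqrt 5 / 72) ((2 * s + 1) / 8) /\
  (- (2 * s * (s + 1) * (2 * s + 2) * 3) / gamma ^ 4 <= D2n 4 u v s / G u v s /\
   D2n 4 u v s / G u v s <=
     2 * s * (2 * s + 1) * (2 * s + 2) * (2 * s + 3) / gamma ^ 4).
Proof.
  intros hg hs hgu.
  rewrite !Rabs_div_pos by apply G_pos.
  rewrite !D2n_div_G by (lia || lra).
  split; [| split; [split | split; [| split]]].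
  - apply dG_ratio_1_abs_le; assumption.
  - apply dG_ratio_2_ge; assumption.
  - apply dG_ratio_2_le; assumption.
  - apply dG_ratio_3_abs_le; assumption.
  - apply dG_ratio_4_ge; assumption.
  - apply dG_ratio_4_le; assumption.
Qed.
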